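(* Consider one iteration of noisy Gallager-B decoding on a $(d_v,d_c)$-regular LDPC code with $d_v\ge4$, under the density-evolution assumptions that the correct codeword is all-zero, the decoding neighborhood is cycle-free, and all incoming variable-to-check messages are independently in error with probability $p_0$. Let $d_T\ge2$ be an integer, $d=\lceil\frac{d_v-1}{2}\rceil$, $$p_{\text{thr}}=\binom{d_v-1}{\lfloor\frac{d_v-1}{2}\rfloor}^{-\frac{1}{d-1}}d_c^{-\frac{d}{d-1}}d_T^{-\frac{1}{d-1}}(d_T+1)^{-\frac{d}{d-1}},$$ and suppose $p_{\text{maj}}\le p_{\text{thr}}$, $p_{\text{xor}}\le\frac{d_T+1}{d_c}p_{\text{thr}}$, $p_{\text{and}}\le\frac{d_T+1}{d_T}p_{\text{thr}}$. Let $p_{\text{reg}}=p_{\text{xor}}+(d_T+1)p_{\text{thr}}$. If $p_0<p_{\text{reg}}$, then the bit error probability $p_e^{\text{dec}}$ of each variable-to-check message after one iteration satisfies $$p_{\text{maj}}<p_e^{\text{dec}}\le p_{\text{maj}}+\frac{1}{d_T}p_{\text{thr}}.$$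
   Context: Noisy Gallager-B iteration: for each Tanner-graph edge $(v,c)$, the check-to-variable message $m_{c\to v}=\bigoplus_{v'\in\mathcal N(c)\setminus v}m_{v'\to c}$ is computed by an XOR gate whose output is flipped independently with probability $p_{\text{xor}}$; the new variable-to-check message $m_{v\to c}$ equals $x$ if at least $b=\lfloor\frac{d_v+1}{2}\rfloor$ of the messages $m_{c'\to v}$, $c'\in\mathcal N(v)\setminus c$, equal $x$, and a uniformly random bit otherwise, and is computed by a majority gate whose output is flipped independently with probability $p_{\text{maj}}$ (all gate errors independent, all probabilities $<1/2$). $p_{\text{and}}$ denotes the error probability of AND gates (appearing only in the hypotheses). *)

From HB Require Import structures.
From mathcomp Require Import all_boot all_order all_algebra.
From mathcomp Require Import all_classical all_reals all_analysis.
Set Implicit Arguments. Unset Strict Implicit. Unset Printing Implicit Defensive.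
Import Order.TTheory GRing.Theory Num.Theory.
Local Open Scope ring_scope.

Definition prob_indep {R : numDomainType} {I : finType} (p : I -> R)
  (E : pred {ffun I -> bool}) : R :=
  \sum_(w : {ffun I -> bool} | E w) \prod_(i : I) (if w i then p i else 1 - p i).

(* Random sources of one noisy Gallager-B iteration on the cycle-free
   decoding neighbourhood of an edge (v,c):
   - inl (inl (j,k)) : incoming message m_{v'->c_j} from the k-th other
                       neighbour v' of the j-th other check c_j of v
                       (true = in error, i.e. equals 1 since the codeword is 0)
   - inl (inr j)     : error (flip) of the XOR gate computing m_{c_j -> v}
   - inr false       : uniformly random tie-breaking bit of the variable node
   - inr true        : error (flip) of the majority gate computing m_{v -> c} *)
Definition site (dv dc : nat) :=
  ((('I_dv.-1 * 'I_dc.-1) + 'I_dv.-1) + bool)%type.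

Definition site_prob {R : numDomainType} (dv dc : nat) (p0 pxor pmaj : R)
  (s : site dv dc) : R :=
  match s with
  | inl (inl _) => p0
  | inl (inr _) => pxor
  | inr true => pmaj
  | inr false => 1 / 2
  end.

Definition check_msg (dv dc : nat) (w : {ffun site dv dc -> bool}) (j : 'I_dv.-1)
  : bool :=
  addb (\big[addb/false]_(k < dc.-1) w (inl (inl (j, k)))) (w (inl (inr j))).

Definition var_msg (dv dc : nat) (w : {ffun site dv dc -> bool}) : bool :=
  let n1 := (\sum_(j < dv.-1) nat_of_bool (@check_msg dv dc w j))%N in
  let n0 := (dv.-1 - n1)%N in
  let b := (dv.+1)./2 in
  let pre := if (b <= n0)%N then false
             else if (b <= n1)%N then true
             else w (inr false) in
  addb pre (w (inr true)).

Definition pe_dec {R : numDomainType} (dv dc : nat) (p0 pxor pmaj : R) : R :=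
  prob_indep (@site_prob R dv dc p0 pxor pmaj) (fun w => @var_msg dv dc w).

Definition dceil (dv : nat) : nat := uphalf dv.-1.

Definition p_thr {R : realType} (dv dc dT : nat) : R :=
  let d := dceil dv in
  let e1 : R := - (1 / (d.-1)%:R) in
  let ed : R := - (d%:R / (d.-1)%:R) in
  ('C(dv.-1, (dv.-1)./2))%:R `^ e1 * (dc%:R `^ ed) * (dT%:R `^ e1)
    * ((dT.+1)%:R `^ ed).

Definition p_reg {R : realType} (dv dc dT : nat) (pxor : R) : R :=
  pxor + (dT.+1)%:R * p_thr dv dc dT.

(* The majority gate's own error is independent of everything upstream, so
   p_e = p_maj + (1 - 2 p_maj) q, where q is the probability that the noiseless
   majority vote is wrong and 0 < q; this gives the lower bound, and the upper
   bound once q <= p_thr / d_T.  The vote is wrong only if at least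
   d = ceil((d_v - 1)/2) of the d_v - 1 incoming check messages are wrong, and a
   wrong check message needs its XOR gate or one of its d_c - 1 inputs to fail.
   A union bound over the d checks and one failing source in each gives
   q <= C(d_v - 1, d) eps^d with eps = p_xor + (d_c - 1) p_0 <= d_c (d_T + 1) p_thr,
   and the exponents in p_thr are chosen exactly so that
   C(d_v - 1, floor((d_v - 1)/2)) (d_c (d_T + 1) p_thr)^d = p_thr / d_T. *)

From HB Require Import structures.
From mathcomp Require Import all_boot all_order all_algebra.
From mathcomp Require Import all_classical all_reals all_analysis.
From mathcomp Require Import zify ring lra.
Set Implicit Arguments. Unset Strict Implicit. Unset Printing Implicit Defensive.
Import Order.TTheory GRing.Theory Num.Theory.
Local Open Scope ring_scope.

Section IndependentBits.
Variables (R : numDomainType) (I : finType) (p : I -> R).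

Local Notation bitw i b := (if b then p i else 1 - p i).

Lemma eq_prob_indep (E F : pred {ffun I -> bool}) :
  E =1 F -> prob_indep p E = prob_indep p F.
Proof. by move=> EF; apply: eq_bigl. Qed.

Lemma prob_indep_split (E F : pred {ffun I -> bool}) :
  prob_indep p E =
  prob_indep p (fun w => E w && F w) + prob_indep p (fun w => E w && ~~ F w).
Proof. exact: bigID. Qed.

Lemma prob_indep_prod (A : I -> pred bool) :
  prob_indep p (fun w => [forall i, A i (w i)]) = \prod_i \sum_(b | A i b) bitw i b.
Proof.
rewrite /prob_indep.
under [RHS]eq_bigr => i _ do rewrite big_mkcond /=.
rewrite bigA_distr_bigA /= [LHS]big_mkcond /=; apply: eq_bigr => w _.
case: forallP => [Aw | /forallP]; first by apply: eq_bigr => i _; rewrite Aw.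
rewrite negb_forall => /existsP[i nAi].
by rewrite (bigD1 i) //= (negbTE nAi) mul0r.
Qed.

Lemma prob_indep_all (T : {set I}) :
  prob_indep p (fun w => [forall i in T, w i]) = \prod_(i in T) p i.
Proof.
rewrite (prob_indep_prod (fun i b => (i \in T) ==> b)) [RHS]big_mkcond /=.
apply: eq_bigr => i _; rewrite big_mkcond big_bool /=.
by case: (i \in T) => /=; rewrite ?add0r ?addr0 // addrC subrK.
Qed.

Lemma prob_indep_coord (s : I) : prob_indep p (fun w => w s) = p s.
Proof.
rewrite -(big_set1 _ s p : \prod_(i in [set s]) p i = p s) -prob_indep_all.
apply: eq_prob_indep => w.
by apply/idP/forallP => [ws i | /(_ s)]; rewrite inE ?eqxx //; apply/implyP => /eqP ->.
Qed.

Section OffCoordinate.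
Variables (s : I) (E : pred {ffun I -> bool}).
Hypothesis E_off_s :
  forall w w' : {ffun I -> bool}, (forall i, i != s -> w i = w' i) -> E w = E w'.

Lemma prob_indep_coordI : prob_indep p (fun w => E w && w s) = prob_indep p E * p s.
Proof.
(* Flipping bit s is a bijection preserving E and the weight of the other bits. *)
pose flip (w : {ffun I -> bool}) := [ffun i => if i == s then ~~ w i else w i].
have flipK : involutive flip.
  by move=> w; apply/ffunP => i; rewrite !ffunE; case: eqP; rewrite ?negbK.
have flip_off w i : i != s -> flip w i = w i by rewrite ffunE => /negbTE ->.
pose rest (w : {ffun I -> bool}) := \prod_(i | i != s) bitw i (w i).
have restF w : rest (flip w) = rest w by apply: eq_bigr => i /flip_off ->.
have EF w : E (flip w) = E w by apply: E_off_s => i /flip_off.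
have weightE (w : {ffun I -> bool}) : \prod_i bitw i (w i) = bitw s (w s) * rest w.
  by rewrite (bigD1 s).
pose X := \sum_(w | E w && w s) rest w.
have E_on : prob_indep p (fun w => E w && w s) = p s * X.
  by rewrite /prob_indep mulr_sumr; apply: eq_bigr => w /andP[_ ws]; rewrite weightE ws.
have E_off : prob_indep p (fun w => E w && ~~ w s) = (1 - p s) * X.
  rewrite /prob_indep mulr_sumr (reindex_inj (inv_inj flipK)) /=.
  apply: eq_big => [w | w]; first by rewrite EF ffunE eqxx negbK.
  by case/andP=> _; rewrite ffunE eqxx negbK => ws; rewrite weightE restF ffunE eqxx ws.
by rewrite (prob_indep_split E (fun w => w s)) E_on E_off; ring.
Qed.

Lemma prob_indep_xor :
  prob_indep p (fun w => E w (+) w s) = p s + (1 - 2 * p s) * prob_indep p E.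
Proof.
have -> : prob_indep p (fun w => E w (+) w s) =
    prob_indep p (fun w => E w && ~~ w s) + prob_indep p (fun w => w s && ~~ E w).
  rewrite (prob_indep_split _ E); congr (_ + _); apply: eq_prob_indep => w;
  by case: (E w); case: (w s).
have E_split := prob_indep_split E (fun w => w s).
have s_split := prob_indep_split (fun w => w s) E.
rewrite prob_indep_coordI in E_split.
rewrite prob_indep_coord (eq_prob_indep (F := fun w => E w && w s)) in s_split;
  last by move=> w; rewrite andbC.
rewrite prob_indep_coordI in s_split.
have -> : prob_indep p (fun w => E w && ~~ w s) = prob_indep p E - prob_indep p E * p s.
  by apply: (addrI (prob_indep p E * p s)); rewrite -E_split; ring.
have -> : prob_indep p (fun w => w s && ~~ E w) = p s - prob_indep p E * p s.
  by apply: (addrI (prob_indep p E * p s)); rewrite -s_split; ring.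
ring.
Qed.

End OffCoordinate.

Hypothesis p01 : forall i, 0 <= p i <= 1.

Lemma bitw_ge0 i b : 0 <= bitw i b.
Proof. by case: b; case/andP: (p01 i) => // _; rewrite subr_ge0. Qed.

Lemma weight_ge0 (w : {ffun I -> bool}) : 0 <= \prod_i bitw i (w i).
Proof. by apply: prodr_ge0 => i _; apply: bitw_ge0. Qed.

Lemma prob_indep_gt0 (E : pred {ffun I -> bool}) (w0 : {ffun I -> bool}) :
  E w0 -> (forall i, 0 < bitw i (w0 i)) -> 0 < prob_indep p E.
Proof.
move=> Ew0 w0_pos; rewrite /prob_indep (bigD1 w0) //=.
by rewrite ltr_wpDr ?prodr_gt0 //; apply: sumr_ge0 => w _; apply: weight_ge0.
Qed.

Lemma prob_indep_le (E F : pred {ffun I -> bool}) :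
  (forall w, E w -> F w) -> prob_indep p E <= prob_indep p F.
Proof.
move=> EF; rewrite /prob_indep [leLHS]big_mkcond [leRHS]big_mkcond /=.
apply: ler_sum => w _; case: ifP => [/EF -> // | _].
by case: ifP => _; rewrite ?weight_ge0.
Qed.

Lemma prob_indep_le_sum (X : finType) (Q : pred X) (F : X -> pred {ffun I -> bool})
    (E : pred {ffun I -> bool}) :
  (forall w, E w -> exists2 x, Q x & F x w) ->
  prob_indep p E <= \sum_(x | Q x) prob_indep p (F x).
Proof.
move=> E_cover; rewrite /prob_indep (exchange_big_dep predT) //= big_mkcond /=.
apply: ler_sum => w _; case: ifP => Ew; last first.
  by apply: sumr_ge0 => x _; apply: weight_ge0.
have [x Qx Fxw] := E_cover w Ew.
rewrite (bigD1 x) /= ?Qx ?Fxw // lerDl.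
by apply: sumr_ge0 => y _; apply: weight_ge0.
Qed.

Lemma prob_indep_count_le (J O : finType) (o0 : O) (src : J -> O -> I)
    (A : J -> pred {ffun I -> bool}) (d : nat) (eps : R) :
  (forall j j' o o', src j o = src j' o' -> j = j') ->
  (forall j w, A j w -> exists o, w (src j o)) ->
  (forall j, \sum_o p (src j o) <= eps) ->
  prob_indep p (fun w => d <= #|[set j | A j w]|)%N <= 'C(#|J|, d)%:R * eps ^+ d.
Proof.
move=> src_disj A_src src_le.
(* Union bound over a d-set S of indices and one witnessing source for each j
   in S; sources of distinct indices are distinct bits, so each term is a
   product.  The default o0 is only used outside S. *)
pose Q (x : {set J} * {ffun J -> O}) := (#|x.1| == d) && (x.2 \in pffun_on o0 x.1 predT).
pose F (x : {set J} * {ffun J -> O}) (w : {ffun I -> bool}) :=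
  [forall i in [set src j (x.2 j) | j in x.1], w i].
apply: le_trans (prob_indep_le_sum (Q := Q) (F := F) _) _.
  move=> w; set B := [set j | A j w] => dB.
  have /card_gt0P[S] : (0 < #|[set S : {set J} | S \subset B & #|S| == d]|)%N.
    by rewrite cards_draws bin_gt0.
  rewrite inE => /andP[SB /eqP cS].
  pose f := [ffun j => if j \in S then odflt o0 [pick o | w (src j o)] else o0].
  exists (S, f).
    rewrite /Q /= cS eqxx; apply/pffun_onP; split=> [|o _] //.
    by apply/fintype.subsetP => j; rewrite inE ffunE; case: (j \in S); rewrite ?eqxx.
  apply/forallP => i; apply/implyP => /imsetP[j Sj ->] /=.
  have [x wx] : exists o, w (src j o).
    by apply: A_src; move/fintype.subsetP: SB => /(_ j Sj); rewrite inE.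
  by rewrite ffunE Sj; case: pickP => [y | /(_ x)] /=; rewrite ?wx.
have -> : \sum_(x | Q x) prob_indep p (F x) = \sum_(S : {set J} | #|S| == d)
    \sum_(f in pffun_on o0 S predT) \prod_(j in S) p (src j (f j)).
  rewrite [RHS]pair_big_dep; apply: eq_big => -[S f] //= _.
  by rewrite prob_indep_all big_imset //= => j j' _ _ /src_disj.
rewrite mulr_natl -card_draws -sumr_const.
rewrite [X in _ <= X](eq_bigl (fun S : {set J} => #|S| == d)); last by move=> S; rewrite inE.
apply: ler_sum => S /eqP cS.
rewrite -(big_distr_big o0 (mem S) predT (fun j o => p (src j o))) -cS -prodr_const.
apply: ler_prod => j _.
by rewrite src_le sumr_ge0 // => o _; case/andP: (p01 (src j o)).
Qed.

End IndependentBits.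

Section GallagerB.
Variables dv dc : nat.
Implicit Types (w : {ffun site dv dc -> bool}) (j : 'I_dv.-1).

Definition maj_vote w : bool :=
  let n1 := (\sum_(j < dv.-1) nat_of_bool (check_msg w j))%N in
  let b := (dv.+1)./2 in
  if (b <= dv.-1 - n1)%N then false else if (b <= n1)%N then true else w (inr false).

Lemma var_msgE w : var_msg w = maj_vote w (+) w (inr true).
Proof. by []. Qed.

Lemma maj_vote_off_gate w w' :
  (forall s, s != inr true -> w s = w' s) -> maj_vote w = maj_vote w'.
Proof.
move=> ww'; have check_ww' j : check_msg w j = check_msg w' j.
  by rewrite /check_msg ww' //; congr addb; apply: eq_bigr => k _; rewrite ww'.
by rewrite /maj_vote ww' //; under eq_bigr do rewrite check_ww'.
Qed.

Lemma maj_vote_count w : maj_vote w -> (dceil dv <= #|[set j | check_msg w j]|)%N.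
Proof.
have -> : #|[set j | check_msg w j]| = (\sum_(j < dv.-1) nat_of_bool (check_msg w j))%N.
  by rewrite -sum1_card big_mkcond; apply: eq_bigr => j _; rewrite inE; case: check_msg.
by rewrite /maj_vote /dceil; case: ifP => // ? _; lia.
Qed.

(* None stands for the XOR gate of the check. *)
Definition check_src j (o : option 'I_dc.-1) : site dv dc :=
  if o is Some k then inl (inl (j, k)) else inl (inr j).

Lemma check_src_disj j j' o o' : check_src j o = check_src j' o' -> j = j'.
Proof. by case: o o' => [k|] [k'|] // [] // ->. Qed.

Lemma check_msg_src j w : check_msg w j -> exists o, w (check_src j o).
Proof.
apply: contraPP => /forallNP none; rewrite /check_msg (negbTE (introN idP (none None))).
by rewrite addbF big1 // => k _; apply/negbTE/negP/(none (Some k)).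
Qed.

Definition all_xor_flipped : {ffun site dv dc -> bool} :=
  [ffun s => if s is inl (inr _) then true else false].

Lemma maj_vote_all_xor_flipped : (3 <= dv)%N -> maj_vote all_xor_flipped.
Proof.
have all_checks j : check_msg all_xor_flipped j.
  by rewrite /check_msg ffunE big1 // => k _; rewrite ffunE.
rewrite /maj_vote; under eq_bigr do rewrite all_checks.
move=> dv_ge3; rewrite sum_nat_const card_ord muln1 subnn.
have -> : ((dv.+1)./2 <= 0)%N = false by lia.
by have -> : ((dv.+1)./2 <= dv.-1)%N by lia.
Qed.

Variables (R : numDomainType) (p0 pxor pmaj : R).

Lemma sum_site_prob_check_src j :
  \sum_o site_prob p0 pxor pmaj (check_src j o) = pxor + (dc.-1)%:R * p0.
Proof.
rewrite (bigD1 None) //=; congr (_ + _).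
rewrite (eq_bigl (mem (predC1 None))) // (eq_bigr (fun _ => p0)); last by case.
by rewrite sumr_const cardC1 card_option card_ord mulr_natl.
Qed.

End GallagerB.

Lemma binomial_dceil dv : 'C(dv.-1, dceil dv) = 'C(dv.-1, (dv.-1)./2).
Proof. by rewrite -bin_sub /dceil; [congr 'C(_, _) |]; lia. Qed.

Section Threshold.
Variables (R : realType) (dv dc dT : nat).
Hypotheses (dv_ge4 : (4 <= dv)%N) (dc_gt0 : (0 < dc)%N) (dT_gt0 : (0 < dT)%N).

Local Notation t := (p_thr dv dc dT : R).
Local Notation C := ('C(dv.-1, (dv.-1)./2)%:R : R).
Local Notation T := (dc%:R * (dT.+1)%:R * t).

Lemma p_thr_ge0 : 0 <= t.
Proof. by rewrite !mulr_ge0 // powR_ge0. Qed.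

Lemma scaled_p_thr_exprE : T ^+ (dceil dv).-1 * (C * dc%:R * dT%:R * (dT.+1)%:R) = 1.
Proof.
have [m dE] : exists m, dceil dv = m.+2 by exists (dceil dv).-2; rewrite /dceil; lia.
have m1_neq0 : (m.+1%:R : R) != 0 by rewrite pnatr_eq0.
have powRM (x e : R) n : (x `^ e) ^+ n = x `^ (e * n%:R).
  by rewrite powRrM powR_mulrn // powR_ge0.
have inv_m1 : - (1 / m.+1%:R) * m.+1%:R = -1 :> R by field.
have d_m1 : - (m.+2%:R / m.+1%:R) * m.+1%:R = - m.+2%:R :> R by field.
rewrite dE /= /p_thr dE /= !exprMn !powRM inv_m1 d_m1.
rewrite !powR_inv1 ?ler0n // !powR_invn ?ler0n //.
have C_neq0 : C != 0 by rewrite pnatr_eq0 -lt0n bin_gt0; lia.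
have dc_neq0 : dc%:R != 0 :> R by rewrite pnatr_eq0 -lt0n.
have dT_neq0 : dT%:R != 0 :> R by rewrite pnatr_eq0 -lt0n.
have dT1_neq0 : dT.+1%:R != 0 :> R by rewrite pnatr_eq0.
have dcm_neq0 : dc%:R ^+ m != 0 :> R by rewrite expf_neq0.
have dT1m_neq0 : dT.+1%:R ^+ m != 0 :> R by rewrite expf_neq0.
rewrite !exprS; field.
by rewrite addrC natr1 dT1m_neq0 dT1_neq0 dT_neq0 dcm_neq0 dc_neq0 C_neq0.
Qed.

Lemma scaled_p_thr_lt1 : T < 1.
Proof.
have K_gt1 : 1 < C * dc%:R * dT%:R * (dT.+1)%:R.
  have C_ge1 : 1 <= C by rewrite ler1n bin_gt0; lia.
  have dc_ge1 : 1 <= dc%:R :> R by rewrite ler1n.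
  have dT_ge1 : 1 <= dT%:R :> R by rewrite ler1n.
  have dT1_ge2 : 2 <= (dT.+1)%:R :> R by rewrite ler_nat ltnS.
  have Cdc_ge1 : 1 <= C * dc%:R by nra.
  have CdcdT_ge1 : 1 <= C * dc%:R * dT%:R by nra.
  by nra.
rewrite ltNge; apply/negP => /(exprn_ege1 (dceil dv).-1) Tm_ge1.
by have := scaled_p_thr_exprE; nra.
Qed.

Lemma binom_scaled_p_thr : C * T ^+ dceil dv = dT%:R^-1 * t.
Proof.
have K_neq0 : C * dc%:R * dT%:R * (dT.+1)%:R != 0.
  by rewrite !mulf_neq0 ?pnatr_eq0 -?lt0n ?bin_gt0 //; lia.
have := scaled_p_thr_exprE; have [n ->] : exists n, dceil dv = n.+1.
  by exists (dceil dv).-1; rewrite /dceil; lia.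
move=> /= Tn_K; rewrite exprS; have -> : T ^+ n = (C * dc%:R * dT%:R * (dT.+1)%:R)^-1.
  by apply: (mulIf K_neq0); rewrite Tn_K mulVf.
field; move: K_neq0; rewrite !mulf_eq0 !negb_or addrC natr1.
by move=> /andP[/andP[/andP[-> ->] ->] ->].
Qed.

End Threshold.

Lemma pe_dec_bounds (R : realFieldType) (dv dc : nat) (p0 pxor pmaj eps : R) :
  (3 <= dv)%N -> 0 <= p0 < 1 -> 0 < pxor <= 1 -> 0 < pmaj < 1 / 2 ->
  pxor + (dc.-1)%:R * p0 <= eps ->
  pmaj < pe_dec dv dc p0 pxor pmaj /\
  pe_dec dv dc p0 pxor pmaj <= pmaj + 'C(dv.-1, dceil dv)%:R * eps ^+ dceil dv.
Proof.
move=> dv_ge3 /andP[p0_ge0 p0_lt1] /andP[pxor_gt0 pxor_le1] /andP[pmaj_gt0 pmaj_lt] eps_ge.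
set sp := @site_prob R dv dc p0 pxor pmaj.
have sp01 s : 0 <= sp s <= 1 by case: s => [[[j k]|j]|[]] /=; apply/andP; split; lra.
have peE : pe_dec dv dc p0 pxor pmaj =
    pmaj + (1 - 2 * pmaj) * prob_indep sp (@maj_vote dv dc).
  rewrite /pe_dec (eq_prob_indep _ (@var_msgE dv dc)).
  exact: prob_indep_xor (@maj_vote_off_gate dv dc).
have vote_gt0 : 0 < prob_indep sp (@maj_vote dv dc).
  apply: (prob_indep_gt0 sp01 (maj_vote_all_xor_flipped dc dv_ge3)).
  by case=> [[[j k]|j]|[]]; rewrite ffunE /=; lra.
have vote_le : prob_indep sp (@maj_vote dv dc) <= 'C(dv.-1, dceil dv)%:R * eps ^+ dceil dv.
  have src_le j : \sum_o sp (@check_src dv dc j o) <= eps.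
    by rewrite sum_site_prob_check_src.
  apply: le_trans (prob_indep_le sp01 (@maj_vote_count dv dc)) _.
  have := prob_indep_count_le sp01 None (dceil dv) (@check_src_disj dv dc)
    (@check_msg_src dv dc) src_le.
  by rewrite card_ord.
by rewrite peE; split; nra.
Qed.

Unset Implicit Arguments.
Theorem lemma2 (R : realType) (dv dc dT : nat) (p0 pxor pmaj pand : R) :
  (4 <= dv)%N -> (2 <= dc)%N -> (2 <= dT)%N ->
  0 <= p0 ->
  0 < pxor < 1 / 2 -> 0 < pmaj < 1 / 2 -> 0 < pand < 1 / 2 ->
  pmaj <= p_thr dv dc dT ->
  pxor <= (dT.+1)%:R / dc%:R * p_thr dv dc dT ->
  pand <= (dT.+1)%:R / dT%:R * p_thr dv dc dT ->
  p0 < p_reg dv dc dT pxor ->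
  pmaj < pe_dec dv dc p0 pxor pmaj /\
  pe_dec dv dc p0 pxor pmaj <= pmaj + dT%:R^-1 * p_thr dv dc dT.
Proof.
move=> dv_ge4 dc_ge2 dT_ge2 p0_ge0 /andP[pxor_gt0 pxor_lt] pmaj_bounds _ _ pxor_le _.
rewrite /p_reg => p0_lt.
have dc_gt0 := ltnW dc_ge2; have dT_gt0 := ltnW dT_ge2.
have T_lt1 := scaled_p_thr_lt1 R dv_ge4 dc_gt0 dT_gt0.
have t_ge0 := p_thr_ge0 R dv dc dT.
set t := p_thr dv dc dT in pxor_le p0_lt T_lt1 t_ge0 *.
have dc_ge2R : 2 <= dc%:R :> R by rewrite ler_nat.
have dT1t_ge0 : 0 <= (dT.+1)%:R * t by rewrite mulr_ge0.
have p0_bounds : 0 <= p0 < 1 by rewrite p0_ge0 /=; nra.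
have pxor_bounds : 0 < pxor <= 1 by apply/andP; split; lra.
have eps_le : pxor + (dc.-1)%:R * p0 <= dc%:R * (dT.+1)%:R * t.
  by move: pxor_le; rewrite -subn1 natrB // mulrAC ler_pdivlMr ?ltr0n //; nra.
have [lower upper] :=
  pe_dec_bounds (ltnW dv_ge4) p0_bounds pxor_bounds pmaj_bounds eps_le.
split=> //; apply: le_trans upper _.
by rewrite binomial_dceil binom_scaled_p_thr.
Qed.
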